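(* A finite simple graph $G$ belongs to $\mathcal{C}_3$ if and only if $\chi_c(G)<2$.
   Context: A circular ordering of a finite set is obtained by placing its elements at distinct points of a circle; formally, the set of triples $(x,y,z)$ of distinct elements such that clockwise from $x$ one meets $y$ before $z$. A homomorphism $(H,C_H)\to(G,C_G)$ of circularly ordered graphs is a map on vertices preserving edges such that $(f(x),f(y),f(z))\in C_G$ whenever $(x,y,z)\in C_H$ and $f(x),f(y),f(z)$ are pairwise distinct. $SP_3$ is the path $v_1v_2v_3$ with its (unique) circular ordering placing $v_1,v_2,v_3$ clockwise. $\mathcal{C}_3$ is the class of graphs $G$ admitting a circular ordering $C$ of $V(G)$ with no homomorphism from $SP_3$ to $(G,C)$. For integers $1\le q\le p$, $K_{p/q}$ is the graph on $\{0,\dots,p-1\}$ with $ij$ an edge iff $\min(|i-j|,p-|i-j|)\ge q$; $\chi_c(G)=\min\{p/q: G\to K_{p/q}\}$. *)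

From mathcomp Require Import all_boot.
Set Implicit Arguments. Unset Strict Implicit. Unset Printing Implicit Defensive.

Definition simple_graph (T : finType) (E : rel T) : Prop :=
  symmetric E /\ irreflexive E.

Definition cyc3 (a b c : nat) : bool :=
  [|| (a < b < c), (b < c < a) | (c < a < b)].

(* The circular ordering induced by placing the elements of T at distinct
   points of a circle, given by an injective position map pos : T -> nat:
   (x,y,z) is in C iff x,y,z are distinct and, clockwise from x, one meets y
   before z. *)
Definition circ_of (T : finType) (pos : T -> nat) (x y z : T) : Prop :=
  [/\ x != y, y != z, x != z & cyc3 (pos x) (pos y) (pos z)].

Definition is_circular_ordering (T : finType) (C : T -> T -> T -> Prop) : Prop :=
  exists pos : T -> nat, injective pos /\ forall x y z, C x y z <-> circ_of pos x y z.

Definition co_hom (TH TG : finType) (EH : rel TH) (CH : TH -> TH -> TH -> Prop)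
  (EG : rel TG) (CG : TG -> TG -> TG -> Prop) (f : TH -> TG) : Prop :=
  (forall x y, EH x y -> EG (f x) (f y)) /\
  (forall x y z, CH x y z -> f x != f y -> f y != f z -> f x != f z ->
     CG (f x) (f y) (f z)).

(* SP_3: the path v1 v2 v3 (vertices 0,1,2 of 'I_3), with v1,v2,v3 clockwise. *)
Definition SP3_edge : rel 'I_3 := fun i j =>
  ((i : nat) == 0) && ((j : nat) == 1) || ((i : nat) == 1) && ((j : nat) == 0) ||
  ((i : nat) == 1) && ((j : nat) == 2) || ((i : nat) == 2) && ((j : nat) == 1).

Definition SP3_circ : 'I_3 -> 'I_3 -> 'I_3 -> Prop :=
  circ_of (fun i : 'I_3 => (i : nat)).

Definition in_C3 (T : finType) (E : rel T) : Prop :=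
  exists C : T -> T -> T -> Prop, is_circular_ordering C /\
    ~ exists f : 'I_3 -> T, co_hom SP3_edge SP3_circ E C f.

Definition natdist (a b : nat) : nat := maxn a b - minn a b.
Definition Kpq_edge (p q : nat) : rel 'I_p := fun i j =>
  q <= minn (natdist i j) (p - natdist i j).

Definition graph_hom (T : finType) (E : rel T) (U : finType) (F : rel U) (f : T -> U) :=
  forall x y, E x y -> F (f x) (f y).

(* chi_c(G) < 2, i.e. the minimum of {p/q : 1 <= q <= p, G -> K_{p/q}} is < 2,
   i.e. some K_{p/q} with p/q < 2 (p < 2q) admits a homomorphism from G. *)
Definition chi_c_lt2 (T : finType) (E : rel T) : Prop :=
  exists p q : nat, [/\ 1 <= q, q <= p, p < 2 * q &
    exists f : T -> 'I_p, graph_hom E (@Kpq_edge p q) f].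

From mathcomp Require Import all_boot.
From mathcomp Require Import zify.

(* Both sides say that G has no edge. A circular clique K_{p/q} with p < 2q
   has no edge, since two points of a p-cycle are at cyclic distance at most
   p/2 < q. Conversely, an edge xy of G is the image of SP_3 under the folding
   v1, v3 |-> x, v2 |-> y; as v1 and v3 collapse, the circular-order condition
   is vacuous, so no circular ordering of G avoids SP_3. *)

Definition edgeless {T : finType} (E : rel T) : Prop := forall x y, ~~ E x y.

Lemma Kpq_edge_lt2 (p q : nat) (i j : 'I_p) : p < 2 * q -> ~~ Kpq_edge q i j.
Proof.
rewrite /Kpq_edge /natdist -ltnNge => lt_p_2q.
have := ltn_ord i; have := ltn_ord j; lia.
Qed.

Lemma chi_c_lt2_edgeless (T : finType) (E : rel T) :
  chi_c_lt2 E <-> edgeless E.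
Proof.
split.
- move=> [p [q [_ _ lt_p_2q [f homf]]]] x y; apply/negP => /homf.
  by apply/negP; apply: Kpq_edge_lt2.
- move=> noE; exists 1, 1; split => //; exists (fun _ => ord0) => x y.
  by rewrite (negbTE (noE x y)).
Qed.

Lemma co_hom_SP3_edge (T : finType) (E : rel T) C (f : 'I_3 -> T) :
  co_hom SP3_edge SP3_circ E C f -> E (f ord0) (f (@Ordinal 3 1 isT)).
Proof. by case=> homE _; apply: homE. Qed.

Lemma co_hom_SP3_fold (T : finType) (E : rel T) C (x y : T) :
  symmetric E -> E x y ->
  co_hom SP3_edge SP3_circ E C (fun i : 'I_3 => if val i == 1 then y else x).
Proof.
move=> symE Exy; split.
- move=> [[|[|[|?]]] ?] [[|[|[|?]]] ?] //=; rewrite /SP3_edge //= => _;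
    by rewrite ?Exy // symE.
- move=> [[|[|[|?]]] ?] [[|[|[|?]]] ?] [[|[|[|?]]] ?] //=;
    rewrite /SP3_circ /circ_of => -[] //=; rewrite ?eqxx //.
Qed.

Lemma enum_rank_circular (T : finType) :
  is_circular_ordering (circ_of (fun x : T => val (enum_rank x))).
Proof.
exists (fun x : T => val (enum_rank x)); split => //.
by move=> a b /val_inj /enum_rank_inj.
Qed.

Lemma in_C3_edgeless (T : finType) (E : rel T) :
  symmetric E -> in_C3 E <-> edgeless E.
Proof.
move=> symE; split.
- move=> [C [_ noSP3]] x y; apply/negP => Exy; apply: noSP3.
  by eexists; apply: co_hom_SP3_fold Exy.
- move=> noE; exists (circ_of (fun x : T => val (enum_rank x))).
  split; first exact: enum_rank_circular.
  by move=> [f /co_hom_SP3_edge]; apply/negP.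
Qed.

Theorem mainTheorem15 (T : finType) (E : rel T) :
  simple_graph E -> (in_C3 E <-> chi_c_lt2 E).
Proof.
move=> [symE _]; rewrite chi_c_lt2_edgeless; exact: in_C3_edgeless.
Qed.
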